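(* There exist finite simple undirected graphs $G_1$, $G_2$ and an integer $\alpha \ge 1$ such that 1-WL does not distinguish $G_1$ and $G_2$ (for every $i \ge 0$ the multisets of 1-WL colours $\{\!\{ c^i_v : v \in V_1\}\!\}$ and $\{\!\{ c^i_v : v \in V_2\}\!\}$ coincide), but $G_1$ and $G_2$ are not $\textsc{Igel}$-equivalent for $\alpha$.
   Context: Graphs $G=(V,E)$ are finite, simple and undirected; $d_G(v)$ is the degree of $v$ in $G$, $l_G(u,v)$ the shortest-path distance, $\{\!\{\cdot\}\!\}$ denotes a multiset, and $\mathcal{N}^\alpha_G(v) = \{u \in V : l_G(u,v) \le \alpha\}$. The $\alpha$-depth ego-network $\mathcal{E}^\alpha_v$ of $v$ is the subgraph of $G$ induced by $\mathcal{N}^\alpha_G(v)$. 1-WL (colour refinement): fix an injective map $\mathrm{hash}$ from finite multisets to colours, used simultaneously for both graphs. Initially $c^0_v = \mathrm{hash}(\{\!\{ d_G(v)\}\!\})$, and for $i \ge 0$, $c^{i+1}_v = \mathrm{hash}(\{\!\{ c^i_u : u \in \mathcal{N}^1_G(v),\ u \ne v\}\!\})$. $\textsc{Igel}$ encoding with parameter $\alpha \ge 1$: $e^0_v = \{\!\{(0, d_G(v))\}\!\}$, and for $i = 1,\dots,\alpha$, $e^i_v = e^{i-1}_v \cup \{\!\{ (i, d_{\mathcal{E}^\alpha_v}(u)) : u \in \mathcal{N}^\alpha_G(v),\ l_G(u,v) = i\}\!\}$ (multiset union), where $d_{\mathcal{E}^\alpha_v}(u)$ is the degree of $u$ inside $\mathcal{E}^\alpha_v$.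 Two graphs $G_1=(V_1,E_1)$, $G_2=(V_2,E_2)$ are $\textsc{Igel}$-equivalent for $\alpha$ if $\{\!\{ e^\alpha_{v} : v \in V_1\}\!\} = \{\!\{ e^\alpha_{v} : v \in V_2\}\!\}$. *)

From mathcomp Require Import all_boot.
From mathcomp Require Import finmap multiset.
Set Implicit Arguments. Unset Strict Implicit. Unset Printing Implicit Defensive.
Local Open Scope mset_scope.
Local Open Scope nat_scope.

Definition simple_graph (V : finType) (e : rel V) : Prop :=
  symmetric e /\ irreflexive e.

Definition deg (V : finType) (e : rel V) (v : V) : nat := #|[set u | e v u]|.

Definition mset_img (V : finType) (K : choiceType) (f : V -> K) (A : {set V})
  : {mset K} := seq_mset [seq f x | x <- enum A].

Fixpoint wl_colour (V : finType) (e : rel V) (hash : {mset nat} -> nat)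
    (i : nat) (v : V) : nat :=
  match i with
  | 0 => hash (seq_mset [:: deg e v])
  | i'.+1 => hash (mset_img (wl_colour e hash i') [set u | e v u])
  end.

Definition wl_hist (V : finType) (e : rel V) (hash : {mset nat} -> nat) (i : nat)
  : {mset nat} := mset_img (wl_colour e hash i) [set: V].

Fixpoint ball (V : finType) (e : rel V) (k : nat) (v : V) : {set V} :=
  match k with
  | 0 => [set v]
  | k'.+1 => ball e k' v :|: [set u | [exists w in ball e k' v, e w u]]
  end.

Definition dist_eq (V : finType) (e : rel V) (i : nat) (u v : V) : bool :=
  if i is i'.+1 then (u \in ball e i v) && (u \notin ball e i' v) else u == v.

(* degree of u inside the ego-network E^alpha_v (induced subgraph on ball alpha v) *)
Definition ego_deg (V : finType) (e : rel V) (alpha : nat) (v u : V) : nat :=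
  #|[set w in ball e alpha v | e u w]|.

Fixpoint igel (V : finType) (e : rel V) (alpha : nat) (i : nat) (v : V)
  : {mset (nat * nat)} :=
  match i with
  | 0 => seq_mset [:: (0, deg e v)]
  | i'.+1 => (igel e alpha i' v `+`
              mset_img (fun u => (i, ego_deg e alpha v u))
                [set u in ball e alpha v | dist_eq e i u v])%mset
  end.

Definition igel_hist (V : finType) (e : rel V) (alpha : nat) :
  {mset {mset (nat * nat)}} :=
  mset_img (igel e alpha alpha) [set: V].

Definition igel_equiv (V1 V2 : finType) (e1 : rel V1) (e2 : rel V2) (alpha : nat)
  : Prop := igel_hist e1 alpha = igel_hist e2 alpha.

Definition wl_indist (V1 V2 : finType) (e1 : rel V1) (e2 : rel V2) : Prop :=
  forall hash : {mset nat} -> nat, injective hash ->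
    forall i, wl_hist e1 hash i = wl_hist e2 hash i.

From mathcomp Require Import all_boot.
From mathcomp Require Import finmap multiset.
Set Implicit Arguments. Unset Strict Implicit. Unset Printing Implicit Defensive.
Local Open Scope mset_scope.
Local Open Scope nat_scope.

(** The hexagon and two disjoint triangles are both 2-regular on six
    vertices; in a regular graph colour refinement never splits a
    colour class, so 1-WL sees the two graphs as equal at every iteration.
    With depth 1, IGEL records for each neighbour u of v the degree of u
    inside the closed neighbourhood of v, which is one more than the number
    of triangles through the edge vu.  The hexagon is triangle-free, so its
    encodings contain the pair (1, 1), whereas every edge of two triangles
    lies in a triangle, so none of its encodings does. *)

Lemma in_seq_mset (K : choiceType) (s : seq K) x : (x \in seq_mset s) = (x \in s).
Proof. by rewrite in_mset mset_seqE -has_count has_pred1. Qed.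

Lemma mset_imgP (V : finType) (K : choiceType) (f : V -> K) (A : {set V}) y :
  reflect (exists2 x, x \in A & y = f x) (y \in mset_img f A).
Proof.
rewrite /mset_img in_seq_mset.
by apply: (iffP mapP) => -[x xA ->]; exists x; rewrite ?mem_enum in xA *.
Qed.

Lemma mset_img_const (V : finType) (K : choiceType) (f : V -> K) (A : {set V}) c :
  {in A, forall x, f x = c} -> mset_img f A = seq_mset (nseq #|A| c).
Proof.
move=> f_c; rewrite /mset_img cardE -(size_map f).
have /all_pred1P <- // : all (pred1 c) [seq f x | x <- enum A].
by apply/allP => _ /mapP [x xA ->]; rewrite /= f_c // -mem_enum.
Qed.

Fixpoint regular_colour (hash : {mset nat} -> nat) (d i : nat) : nat :=
  if i is i'.+1 then hash (seq_mset (nseq d (regular_colour hash d i')))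
  else hash (seq_mset [:: d]).

Section RegularGraph.

Variables (V : finType) (e : rel V) (d : nat).
Hypothesis deg_e : forall v, deg e v = d.

Lemma wl_colour_regular hash i v : wl_colour e hash i v = regular_colour hash d i.
Proof.
elim: i v => [|i IHi] v /=; first by rewrite deg_e.
by rewrite (@mset_img_const _ _ _ _ (regular_colour hash d i)) // -/(deg e v) deg_e.
Qed.

Lemma wl_hist_regular hash i :
  wl_hist e hash i = seq_mset (nseq #|V| (regular_colour hash d i)).
Proof.
by rewrite /wl_hist (@mset_img_const _ _ _ _ (regular_colour hash d i)) ?cardsT //
  => v _; apply: wl_colour_regular.
Qed.

End RegularGraph.

Lemma wl_indist_regular (V1 V2 : finType) (e1 : rel V1) (e2 : rel V2) d :
  #|V1| = #|V2| -> (forall v, deg e1 v = d) -> (forall v, deg e2 v = d) ->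
  wl_indist e1 e2.
Proof.
by move=> eq_card deg_e1 deg_e2 hash _ i;
  rewrite (wl_hist_regular deg_e1) (wl_hist_regular deg_e2) eq_card.
Qed.

Lemma igel_equiv_mem (V1 V2 : finType) (e1 : rel V1) (e2 : rel V2) alpha :
  igel_equiv e1 e2 alpha ->
  forall v1, exists v2, igel e2 alpha alpha v2 = igel e1 alpha alpha v1.
Proof.
move=> eq_hist v1.
have : igel e1 alpha alpha v1 \in igel_hist e1 alpha by apply/mset_imgP; exists v1.
by rewrite eq_hist => /mset_imgP [v2 _ ->]; exists v2.
Qed.

Definition common_nbrs (V : finType) (e : rel V) (v u : V) : {set V} :=
  [set w | e v w && e u w].

Lemma ball1 (V : finType) (e : rel V) v u : (u \in ball e 1 v) = (u == v) || e v u.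
Proof.
rewrite !inE; congr (_ || _); apply/existsP/idP => [[w /andP [] ]|vu].
  by rewrite inE => /eqP ->.
by exists v; rewrite inE eqxx.
Qed.

Lemma igelS (V : finType) (e : rel V) alpha i v :
  igel e alpha i.+1 v = igel e alpha i v `+`
    mset_img (fun u => (i.+1, ego_deg e alpha v u))
      [set u in ball e alpha v | dist_eq e i.+1 u v].
Proof. by []. Qed.

Section DepthOne.

Variables (V : finType) (e : rel V).
Hypothesis e_simple : simple_graph e.

Lemma sphere1E v : [set u in ball e 1 v | dist_eq e 1 u v] = [set u | e v u].
Proof.
apply/setP => u; rewrite inE /dist_eq ball1 andbA andbb !inE.
by case: eqP => [->|] /=; rewrite ?andbT ?(proj2 e_simple).
Qed.

Lemma ego_deg1 v u : e v u -> ego_deg e 1 v u = #|common_nbrs e v u|.+1.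
Proof.
case: e_simple => e_sym e_irr vu; rewrite /ego_deg.
have -> : [set w in ball e 1 v | e u w] = v |: common_nbrs e v u.
  apply/setP => w; rewrite inE ball1 !inE.
  by case: eqP => [->|] //=; rewrite e_sym.
by rewrite cardsU1 inE e_irr.
Qed.

Lemma igel11P v k :
  reflect (exists2 u, e v u & ego_deg e 1 v u = k) ((1, k) \in igel e 1 1 v).
Proof.
rewrite igelS in_msetD sphere1E.
have -> : ((1, k) \in igel e 1 0 v) = false by rewrite /= in_seq_mset.
apply: (iffP (mset_imgP _ _ _)) => [[u] | [u vu <-]].
  by rewrite inE => vu [->]; exists u.
by exists u; rewrite ?inE.
Qed.

End DepthOne.

Lemma card_set_count (V : finType) (P : pred V) : #|[set x | P x]| = count P (enum V).
Proof.
rewrite cardE -size_filter enumT /enum_mem.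
by apply/congr1/eq_filter => x; rewrite !inE.
Qed.

(* [enum 'I_6] does not reduce by computation, so finite checks on ['I_6]
   are run on this explicit list instead. *)
Definition ord6 : seq 'I_6 :=
  [:: @Ordinal 6 0 isT; @Ordinal 6 1 isT; @Ordinal 6 2 isT;
      @Ordinal 6 3 isT; @Ordinal 6 4 isT; @Ordinal 6 5 isT].

Lemma enum_ord6 : enum 'I_6 = ord6.
Proof. by apply: (inj_map val_inj); rewrite val_enum_ord. Qed.

Lemma ord6_forall (P : pred 'I_6) : all P ord6 -> forall v, P v.
Proof. by move=> /allP P_ord6 v; apply: P_ord6; rewrite -enum_ord6 mem_enum. Qed.

Definition hexagon : rel 'I_6 :=
  fun i j => (j == i.+1 %% 6 :> nat) || (i == j.+1 %% 6 :> nat).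

Definition two_triangles : rel 'I_6 := fun i j => (i %/ 3 == j %/ 3) && (i != j).

Lemma hexagon_simple : simple_graph hexagon.
Proof.
split=> [i j | i]; first by rewrite /hexagon orbC.
by apply/negbTE; move: i; apply: ord6_forall.
Qed.

Lemma two_triangles_simple : simple_graph two_triangles.
Proof.
by split=> [i j | i]; rewrite /two_triangles ?eqxx ?andbF // eq_sym [j == i]eq_sym.
Qed.

Lemma hexagon_regular v : deg hexagon v = 2.
Proof. by rewrite /deg card_set_count enum_ord6; apply/eqP; move: v; apply: ord6_forall. Qed.

Lemma two_triangles_regular v : deg two_triangles v = 2.
Proof. by rewrite /deg card_set_count enum_ord6; apply/eqP; move: v; apply: ord6_forall. Qed.

Lemma hexagon_triangle_free v u : hexagon v u -> #|common_nbrs hexagon v u| = 0.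
Proof.
move=> vu; apply/eqP; move: vu; rewrite card_set_count enum_ord6.
apply/implyP; move: u.
by apply: ord6_forall; move: v; apply: ord6_forall.
Qed.

Lemma two_triangles_edge_in_triangle v u :
  two_triangles v u -> 0 < #|common_nbrs two_triangles v u|.
Proof.
rewrite card_set_count enum_ord6; apply/implyP; move: u.
by apply: ord6_forall; move: v; apply: ord6_forall.
Qed.

Theorem lemma2 :
  exists (V1 V2 : finType) (e1 : rel V1) (e2 : rel V2) (alpha : nat),
    [/\ simple_graph e1, simple_graph e2, 1 <= alpha,
        wl_indist e1 e2 & ~ igel_equiv e1 e2 alpha].
Proof.
exists 'I_6, 'I_6, hexagon, two_triangles, 1; split=> //.
- exact: hexagon_simple.
- exact: two_triangles_simple.
- exact: (wl_indist_regular erefl hexagon_regular two_triangles_regular).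
move=> /igel_equiv_mem/(_ ord0) [v igel_v].
have : (1, 1) \in igel hexagon 1 1 ord0.
  apply/(igel11P hexagon_simple); exists (@Ordinal 6 1 isT) => //.
  by rewrite (ego_deg1 hexagon_simple) // hexagon_triangle_free.
rewrite -igel_v => /(igel11P two_triangles_simple) [u vu].
rewrite (ego_deg1 two_triangles_simple) // => -[no_triangle].
by move: (two_triangles_edge_in_triangle vu); rewrite no_triangle.
Qed.
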